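(* Let $c>0$ and let $\nu,\tilde\nu$ be probability measures on $\mathbb R_+$ different from $\boldsymbol d_0$. Suppose that for $i=1,2$ the triple $(\boldsymbol{\tilde\delta}_i,\boldsymbol\delta_i,\boldsymbol x_i)$ satisfies: $\boldsymbol{\tilde\delta}_i\in\widetilde{\mathcal D}$, $\boldsymbol x_i\in\mathbb R\setminus\{0\}$, $\boldsymbol\delta_i=c\int\frac{t}{-\boldsymbol x_i(1+\boldsymbol{\tilde\delta}_i t)}\nu(dt)\in\mathcal D$, $\boldsymbol{\tilde\delta}_i=\int\frac{t}{-\boldsymbol x_i(1+\boldsymbol\delta_i t)}\tilde\nu(dt)$, and $$1-\boldsymbol x_i^2\Bigl(c\int\frac{t^2}{\boldsymbol x_i^2(1+\boldsymbol{\tilde\delta}_i t)^2}\nu(dt)\Bigr)\Bigl(\int\frac{t^2}{\boldsymbol x_i^2(1+\boldsymbol\delta_i t)^2}\tilde\nu(dt)\Bigr)>0.$$ Then $\boldsymbol{\tilde\delta}_1\neq\boldsymbol{\tilde\delta}_2\Rightarrow\boldsymbol x_1\neq\boldsymbol x_2$, and $\boldsymbol\delta_1\neq\boldsymbol\delta_2\Rightarrow\boldsymbol x_1\neq\boldsymbol x_2$.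
   Context: $\boldsymbol d_0$ is the Dirac mass at $0$. Define $\mathcal D=\{0\}\cup\{\boldsymbol\delta\in\mathbb R\setminus\{0\}:-\boldsymbol\delta^{-1}\notin\operatorname{supp}(\tilde\nu)\}$ if $\operatorname{supp}(\tilde\nu)$ is compact and $\mathcal D=\{\boldsymbol\delta\in\mathbb R\setminus\{0\}:-\boldsymbol\delta^{-1}\notin\operatorname{supp}(\tilde\nu)\}$ otherwise; $\widetilde{\mathcal D}$ is defined in the same way with $\nu$ in place of $\tilde\nu$. *)

From HB Require Import structures.
From mathcomp Require Import all_boot all_order all_algebra.
From mathcomp Require Import all_classical all_reals all_analysis.
Set Implicit Arguments. Unset Strict Implicit. Unset Printing Implicit Defensive.
Import Order.TTheory GRing.Theory Num.Theory.
Import numFieldNormedType.Exports.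
Local Open Scope classical_set_scope.
Local Open Scope ring_scope.

Definition msupp (R : realType) (mu : {measure set R -> \bar R}) : set R :=
  [set x | forall e : R, 0 < e -> (0 < mu (ball x e))%E].

(* The set D attached to a measure mu (paper's D with mu = tilde nu,
   paper's tilde D with mu = nu). *)
Definition Dset (R : realType) (mu : {measure set R -> \bar R}) : set R :=
  [set d | (d = 0 /\ compact (msupp mu)) \/ (d != 0 /\ ~ msupp mu (- d^-1))].

Definition prob_on_Rplus (R : realType) (mu : probability R R) : Prop :=
  mu [set x : R | x < 0] = 0%E.

Definition is_dirac0 (R : realType) (mu : probability R R) : Prop :=
  forall A : set R, measurable A -> mu A = \d_(0 : R) A.

Definition triple_ok (R : realType) (c : R) (nu nut : probability R R)
  (dt d x : R) : Prop :=
  Dset nu dt /\ x != 0 /\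
  d = c * Rintegral nu setT (fun t => t / (- x * (1 + dt * t))) /\
  Dset nut d /\
  dt = Rintegral nut setT (fun t => t / (- x * (1 + d * t))) /\
  0 < 1 - x ^+ 2
        * (c * Rintegral nu setT (fun t => t ^+ 2 / (x ^+ 2 * (1 + dt * t) ^+ 2)))
        * Rintegral nut setT (fun t => t ^+ 2 / (x ^+ 2 * (1 + d * t) ^+ 2)).

From HB Require Import structures.
From mathcomp Require Import all_boot all_order all_algebra.
From mathcomp Require Import all_classical all_reals all_analysis.
From mathcomp Require Import ring lra measurable_realfun.
Set Implicit Arguments. Unset Strict Implicit. Unset Printing Implicit Defensive.
Import Order.TTheory GRing.Theory Num.Theory.
Import numFieldNormedType.Exports.
Local Open Scope classical_set_scope.
Local Open Scope ring_scope.

(* If x1 = x2 = x, the resolvent identity k_a - k_b = (b - a) k_a k_b for the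
   kernel k_a t = t / (1 + a t) turns the two pairs of fixed-point equations into
     d1 - d2 = (c / x) (dt1 - dt2) P  and  dt1 - dt2 = x^-1 (d1 - d2) Q,
   with P = int k_dt1 k_dt2 dnu and Q = int k_d1 k_d2 dnut, hence
   dt1 - dt2 = (c / x^2) P Q (dt1 - dt2).  By Cauchy-Schwarz, ((c / x^2) P Q)^2 is
   at most the product of the two quantities (c / x^2) int k^2 dnu int k^2 dnut,
   each of which is < 1 by the stability condition; so dt1 = dt2, and then
   d1 = d2.  The conditions on D make each kernel bounded almost everywhere, so
   that all these integrals are finite. *)

Section ae_Rintegral.
Context d (T : measurableType d) (R : realType) (mu : {measure set T -> \bar R}).

Lemma Rintegral_mul_self_ge0 (f : T -> R) : 0 <= \int[mu]_t (f t * f t).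
Proof. by apply: Rintegral_ge0 => t _; rewrite -expr2 sqr_ge0. Qed.

Lemma Rintegral_Cauchy_Schwarz (f g : T -> R) :
  mu.-integrable setT (EFin \o (fun t => f t * f t)) ->
  mu.-integrable setT (EFin \o (fun t => f t * g t)) ->
  mu.-integrable setT (EFin \o (fun t => g t * g t)) ->
  (\int[mu]_t (f t * g t)) ^+ 2 <=
    \int[mu]_t (f t * f t) * \int[mu]_t (g t * g t).
Proof.
move=> iff ifg igg.
set P := \int[mu]_t (f t * g t); set U := \int[mu]_t (f t * f t).
set V := \int[mu]_t (g t * g t).
have quad_ge0 a b : 0 <= a * a * U - 2 * a * b * P + b * b * V.
  have iZ k h : mu.-integrable setT (EFin \o h) ->
      mu.-integrable setT (EFin \o (fun t => k * h t)).
    by move=> ih; apply: eq_integrable (integrableZl _ k ih) => // t _.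
  have iD h1 h2 : mu.-integrable setT (EFin \o h1) ->
      mu.-integrable setT (EFin \o h2) ->
      mu.-integrable setT (EFin \o (fun t => h1 t + h2 t)).
    by move=> i1 i2; apply: eq_integrable (integrableD _ i1 i2) => // t _.
  have -> : a * a * U - 2 * a * b * P + b * b * V =
      \int[mu]_t ((a * a) * (f t * f t) +
                  ((- (2 * a * b)) * (f t * g t) + (b * b) * (g t * g t))).
    rewrite !RintegralD //; do ?[exact: iZ | apply: iD; exact: iZ].
    by rewrite !RintegralZl // /U /P /V; ring.
  apply: Rintegral_ge0 => t _.
  have -> : a * a * (f t * f t) + (- (2 * a * b) * (f t * g t) + b * b * (g t * g t))
    = (a * f t - b * g t) ^+ 2 by ring.
  exact: sqr_ge0.
have U0 : 0 <= U := Rintegral_mul_self_ge0 f.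
have V0 : 0 <= V := Rintegral_mul_self_ge0 g.
have [U00|U_neq0] := eqVneq U 0.
  have := quad_ge0 (V + 1) P; rewrite U00 expr2; nra.
have := quad_ge0 P U; rewrite expr2 => h.
have Upos : 0 < U by rewrite lt_neqAle eq_sym U_neq0.
nra.
Qed.

Lemma ae_eq_Rintegral (f g : T -> R) :
  measurable_fun setT f -> measurable_fun setT g ->
  {ae mu, forall t, f t = g t} -> \int[mu]_t f t = \int[mu]_t g t.
Proof.
move=> mf mg fg; rewrite /Rintegral; congr fine.
apply: ae_eq_integral => //; [exact/measurable_EFinP|exact/measurable_EFinP|].
by apply: filterS fg => t /= ->.
Qed.

Lemma ae_bounded_integrable (f : T -> R) K : (mu setT < +oo)%E ->
  measurable_fun setT f -> {ae mu, forall t, `|f t| <= K} ->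
  mu.-integrable setT (EFin \o f).
Proof.
move=> muT mf fK; apply/integrableP; split; first exact/measurable_EFinP.
apply: le_lt_trans (integral_le_bound (`|K|)%:E _ _ _ _) _ => //.
- exact/measurable_EFinP.
- apply: filterS fK => t /= fK _; rewrite lee_fin; exact: le_trans fK (ler_norm K).
- by rewrite lte_mul_pinfty.
Qed.

End ae_Rintegral.

Section support.
Context (R : realType) (mu : {measure set R -> \bar R}).

Lemma not_msupp_ball y : ~ msupp mu y -> exists2 e, 0 < e & mu (ball y e) = 0%E.
Proof.
move=> /existsNP [e /not_implyP [e0 he]]; exists e => //.
by apply/le_anti; rewrite measure_ge0 andbT leNgt; apply/negP.
Qed.

Lemma compact_off_msupp_null (A : set R) : compact A ->
  (forall y, A y -> ~ msupp mu y) -> mu A = 0%E.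
Proof.
move=> cA Aoff; apply/le_anti; rewrite measure_ge0 andbT.
move: (cA); rewrite compact_cover => /(_ (R * R)%type
  [set q | 0 < q.2 /\ mu (ball q.1 q.2) = 0%E] (fun q => ball q.1 q.2)
  (fun q _ => ball_open _ _)) [y Ay|D Dnull cov].
  have [e e0 he] := not_msupp_ball (Aoff y Ay).
  by exists (y, e) => //; exact: ballxx.
apply: le_trans (content_sub_fsum mu (finite_fset D) _ _ cov) _.
- by move=> q _; apply: open_measurable; exact: ball_open.
- exact: compact_measurable.
by rewrite fsbig1 // => q /= /Dnull; rewrite inE => -[].
Qed.

Lemma not_msupp_pole_ae_bound a : a != 0 -> ~ msupp mu (- a^-1) ->
  exists2 K, 0 <= K & {ae mu, forall t, `|t| <= K * `|1 + a * t|}.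
Proof.
move=> a0 /not_msupp_ball [e e0 he]; set p := - a^-1.
have a_gt0 : 0 < `|a| by rewrite normr_gt0.
exists ((1 + `|p| / e) / `|a|).
  by rewrite divr_ge0 // addr_ge0 // divr_ge0 // ltW.
exists (ball p e); split => //; first by apply: open_measurable; exact: ball_open.
move=> t /= ht; rewrite -ball_normE /=; apply/negPn/negP; rewrite -leNgt => ept.
apply: ht; have -> : 1 + a * t = a * (t - p).
  by rewrite /p mulrBr mulrN opprK mulfV // addrC.
rewrite normrM mulrA divfK ?normr_eq0 // mulrDl mul1r.
have tp : `|t| <= `|t - p| + `|p| by rewrite -{1}(subrK p t) ler_normD.
apply: (le_trans tp); rewrite lerD2l -{1}(mulr1 `|p|) -mulrA ler_wpM2l //.
by rewrite mulrC ler_pdivlMr // mul1r distrC.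
Qed.

End support.

Section positive_support.
Context (R : realType) (mu : probability R R).
Hypothesis mu_Rplus : prob_on_Rplus mu.

Lemma compact_msupp_ae_bound : compact (msupp mu) ->
  exists2 K, 0 <= K & {ae mu, forall t, `|t| <= K}.
Proof.
move=> /compact_bounded [M [_ HM]]; set K := `|M| + 2.
have K_off y : K <= y -> ~ msupp mu y.
  move=> Ky /(HM (`|M| + 1)).
  rewrite (le_lt_trans (ler_norm M)) ?ltrDl // => /(_ isT).
  by move/(le_trans (ler_norm y)) => /(le_trans Ky); rewrite lerD2l; lra.
exists K; first by rewrite addr_ge0.
have segment_null (n : nat) : mu [set` `[K, K + n%:R]] = 0%E.
  apply: compact_off_msupp_null; first exact: segment_compact.
  by move=> y; rewrite /= in_itv /= => /andP[/K_off].
apply: (@negligibleS _ _ _ mu ([set t | t < 0] `|` \bigcup_n [set` `[K, K + n%:R]])).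
  move=> t /= /negP; rewrite -ltNge => Kt; have [t0|t0] := ltP t 0; first by left.
  right; exists (Num.truncn (t - K)).+1 => //=.
  rewrite in_itv /= -lerBlDl (ltW (truncnS_gt _)) andbT.
  by move: Kt; rewrite ger0_norm // => /ltW.
apply: negligibleU.
  by apply/negligibleP => //; apply: open_measurable; exact: open_lt.
apply: negligible_bigcup => n; apply/negligibleP; last exact: segment_null.
by apply: compact_measurable; exact: segment_compact.
Qed.

Lemma Dset_ae_bound a : Dset mu a ->
  exists2 K, 0 <= K & {ae mu, forall t, `|t| <= K * `|1 + a * t|}.
Proof.
case=> [[-> /compact_msupp_ae_bound [K K0 bK]]|[a0]]; last first.
  exact: not_msupp_pole_ae_bound.
by exists K => //; apply: filterS bK => t; rewrite mul0r addr0 normr1 mulr1.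
Qed.

End positive_support.

Lemma measurable_inv (R : realType) : measurable_fun [set: R] (@GRing.inv R).
Proof.
rewrite -(setUv [set 0]); apply/measurable_funU => //; first exact: measurableC.
split.
  have inv0 : {in [set (0 : R)], (fun=> 0) =1 GRing.inv}.
    by move=> x; rewrite inE /= => ->; rewrite invr0.
  exact: (eq_measurable_fun _ inv0 (measurable_cst _)).
apply: open_continuous_measurable_fun.
  exact/closed_openC/accessible_closed_set1/hausdorff_accessible/Rhausdorff.
by move=> x; rewrite inE /= => /eqP x0; exact: inv_continuous.
Qed.

Definition stieltjes_kernel (R : realType) (a t : R) := t / (1 + a * t).

Section stieltjes_kernel.
Context (R : realType).
Local Notation k := (@stieltjes_kernel R).

Lemma measurable_stieltjes_kernel a : measurable_fun setT (k a).
Proof.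
apply: measurable_funM => //; apply: measurableT_comp; first exact: measurable_inv.
by apply: measurable_funD => //; exact: measurable_funM.
Qed.

Lemma pole_bound_eq0 (a t K : R) :
  `|t| <= K * `|1 + a * t| -> 1 + a * t = 0 -> t = 0.
Proof. by move=> + den0; rewrite den0 normr0 mulr0 normr_le0 => /eqP. Qed.

Lemma stieltjes_kernel_bound a t K : 0 <= K -> `|t| <= K * `|1 + a * t| ->
  `|k a t| <= K.
Proof.
move=> K0 tK; have [->|t0] := eqVneq t 0; first by rewrite /k mul0r normr0.
have den_gt0 : 0 < `|1 + a * t|.
  by rewrite normr_gt0; apply: contra_neq t0; exact: pole_bound_eq0 tK.
by rewrite /k normrM normfV ler_pdivrMr.
Qed.

Lemma stieltjes_kernelB a1 a2 t :
  (1 + a1 * t = 0 -> t = 0) -> (1 + a2 * t = 0 -> t = 0) ->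
  k a1 t - k a2 t = (a2 - a1) * (k a1 t * k a2 t).
Proof.
move=> pole1 pole2; have [->|t0] := eqVneq t 0.
  by rewrite /k !mul0r mulr0 subr0.
have d1 : 1 + a1 * t != 0 by apply: contra_neq t0.
have d2 : 1 + a2 * t != 0 by apply: contra_neq t0.
by rewrite /k; field; rewrite d1 d2.
Qed.

End stieltjes_kernel.

Section stieltjes_transform.
Context (R : realType) (mu : probability R R).
Hypothesis mu_Rplus : prob_on_Rplus mu.
Local Notation k := (@stieltjes_kernel R).
Local Notation integrable f := (mu.-integrable setT (EFin \o f)).

Let mu_setT_fin : (mu setT < +oo)%E.
Proof. by rewrite probability_setT ltry. Qed.

Lemma Dset_ae_stieltjes_kernel_bound a : Dset mu a ->
  exists K, {ae mu, forall t, `|k a t| <= K}.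
Proof.
case/(Dset_ae_bound mu_Rplus) => K K0 bK; exists K.
by apply: filterS bK => t; exact: stieltjes_kernel_bound.
Qed.

Lemma integrable_stieltjes_kernelM a1 a2 : Dset mu a1 -> Dset mu a2 ->
  integrable (fun t => k a1 t * k a2 t).
Proof.
move=> /Dset_ae_stieltjes_kernel_bound [K1 b1].
move=> /Dset_ae_stieltjes_kernel_bound [K2 b2].
apply: (ae_bounded_integrable (K := K1 * K2)) => //.
  by apply: measurable_funM; exact: measurable_stieltjes_kernel.
by apply: filterS2 b1 b2 => t b1 b2; rewrite normrM ler_pM.
Qed.

Lemma integrable_stieltjes_kernel a : Dset mu a -> integrable (k a).
Proof.
move=> /Dset_ae_stieltjes_kernel_bound [K bK].
by apply: ae_bounded_integrable bK => //; exact: measurable_stieltjes_kernel.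
Qed.

Lemma Rintegral_stieltjes_kernelB a1 a2 : Dset mu a1 -> Dset mu a2 ->
  \int[mu]_t k a1 t - \int[mu]_t k a2 t =
  (a2 - a1) * \int[mu]_t (k a1 t * k a2 t).
Proof.
move=> D1 D2; have mk := @measurable_stieltjes_kernel R.
rewrite -RintegralB ?integrable_stieltjes_kernel // -RintegralZl
  ?integrable_stieltjes_kernelM //.
apply: ae_eq_Rintegral; first exact: measurable_funB.
  by apply: measurable_funM => //; exact: measurable_funM.
have [K1 _ b1] := Dset_ae_bound mu_Rplus D1.
have [K2 _ b2] := Dset_ae_bound mu_Rplus D2.
apply: filterS2 b1 b2 => t b1 b2.
by apply: stieltjes_kernelB; [exact: pole_bound_eq0 b1|exact: pole_bound_eq0 b2].
Qed.

Lemma Rintegral_resolventB x a1 a2 : Dset mu a1 -> Dset mu a2 ->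
  \int[mu]_t (t / (- x * (1 + a1 * t))) -
    \int[mu]_t (t / (- x * (1 + a2 * t))) =
  x^-1 * (a1 - a2) * \int[mu]_t (k a1 t * k a2 t).
Proof.
move=> D1 D2; have scale a : Dset mu a ->
    \int[mu]_t (t / (- x * (1 + a * t))) = - x^-1 * \int[mu]_t k a t.
  move=> Da; rewrite -RintegralZl ?integrable_stieltjes_kernel //.
  apply: eq_Rintegral => t _.
  by rewrite /stieltjes_kernel invfM invrN; ring.
rewrite !scale // -mulrBr Rintegral_stieltjes_kernelB //; ring.
Qed.

Lemma Rintegral_resolvent_sqr x a : Dset mu a ->
  \int[mu]_t (t ^+ 2 / (x ^+ 2 * (1 + a * t) ^+ 2)) =
  (x ^+ 2)^-1 * \int[mu]_t (k a t * k a t).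
Proof.
move=> Da; rewrite -RintegralZl ?integrable_stieltjes_kernelM //.
by apply: eq_Rintegral => t _; rewrite /stieltjes_kernel !expr2 !invfM; ring.
Qed.

End stieltjes_transform.

Lemma contraction_eq0 (R : realFieldType) (m P Q U1 U2 V1 V2 u : R) :
  0 <= m -> 0 <= U1 -> 0 <= U2 -> 0 <= V1 -> 0 <= V2 ->
  P ^+ 2 <= U1 * U2 -> Q ^+ 2 <= V1 * V2 ->
  m * U1 * V1 < 1 -> m * U2 * V2 < 1 -> u = m * P * Q * u -> u = 0.
Proof.
move=> m0 U10 U20 V10 V20 PU QV lt1 lt2 uPQ; apply/eqP; apply: contraT => u0.
have mPQ : m * P * Q = 1 by apply: (mulIf u0); rewrite mul1r -uPQ.
have : (m * P * Q) ^+ 2 <= (m * U1 * V1) * (m * U2 * V2).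
  have -> : (m * U1 * V1) * (m * U2 * V2) = m ^+ 2 * ((U1 * U2) * (V1 * V2)) by ring.
  rewrite !exprMn -mulrA; apply: ler_wpM2l; first exact: sqr_ge0.
  by apply: ler_pM; rewrite ?sqr_ge0.
rewrite mPQ expr1n => le1.
have : 0 <= m * U1 * V1 by rewrite !mulr_ge0.
have : 0 <= m * U2 * V2 by rewrite !mulr_ge0.
nra.
Qed.

Theorem lemma3p8 (R : realType) (c : R) (nu nut : probability R R)
  (dt1 d1 x1 dt2 d2 x2 : R) :
  0 < c ->
  prob_on_Rplus nu -> prob_on_Rplus nut ->
  ~ is_dirac0 nu -> ~ is_dirac0 nut ->
  triple_ok c nu nut dt1 d1 x1 ->
  triple_ok c nu nut dt2 d2 x2 ->
  (dt1 != dt2 -> x1 != x2) /\ (d1 != d2 -> x1 != x2).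
Proof.
(* Injectivity does not need the measures to differ from the Dirac mass at 0. *)
move=> c_gt0 nu_Rplus nut_Rplus _ _ [D1 [x_neq0 [ed1 [Dt1 [edt1 stab1]]]]]
  [D2 [_ [ed2 [Dt2 [edt2 stab2]]]]].
suff dt_eq : x1 = x2 -> dt1 = dt2.
  by split; apply: contra_neq => x12; rewrite ?ed1 ?ed2 -?x12 dt_eq.
move=> x12; subst x2; set x := x1.
set m := c / x ^+ 2.
set P := \int[nu]_t (stieltjes_kernel dt1 t * stieltjes_kernel dt2 t).
set Q := \int[nut]_t (stieltjes_kernel d1 t * stieltjes_kernel d2 t).
have d_diff : d1 - d2 = c * x^-1 * (dt1 - dt2) * P.
  by rewrite ed1 ed2 -mulrBr Rintegral_resolventB // !mulrA.
have dt_diff : dt1 - dt2 = x^-1 * (d1 - d2) * Q.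
  by rewrite edt1 edt2 Rintegral_resolventB.
have stable U V : 0 < 1 - x ^+ 2 * (c * ((x ^+ 2)^-1 * U)) * ((x ^+ 2)^-1 * V) ->
    m * U * V < 1.
  suff -> : x ^+ 2 * (c * ((x ^+ 2)^-1 * U)) * ((x ^+ 2)^-1 * V) = m * U * V.
    by rewrite subr_gt0.
  by rewrite /m; field.
rewrite !Rintegral_resolvent_sqr // in stab1 stab2.
apply/eqP; rewrite -subr_eq0; apply/eqP.
apply: (contraction_eq0 (P := P) (Q := Q) _ _ _ _ _
  (Rintegral_Cauchy_Schwarz _ _ _) (Rintegral_Cauchy_Schwarz _ _ _)
  (stable _ _ stab1) (stable _ _ stab2)).
all: try exact: Rintegral_mul_self_ge0.
all: try exact: integrable_stieltjes_kernelM.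
- by apply: divr_ge0; [exact: ltW|exact: sqr_ge0].
- by rewrite {1}dt_diff d_diff /m; field.
Qed.
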